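(* Let Assumptions (A1) and (A3) below hold. If $\Pi^\star_\mathbb{X}$ can be reached from $x\in\mathbb{X}$ within $M$ steps, i.e. there exist $\bar u\in\mathbb{U}^M(x)$ and $l\in\{0,\dots,p^\star-1\}$ with $x_{\bar u}(M,x)=\Pi^\star_\mathbb{X}(l)$, then for all $N\in\mathbb{N}$ $$V_N^\beta(x)-\tfrac{N+1}{2}\ell^\star+\lambda(x)+\bar\lambda\le C(M),\qquad C(M)=M(\ell_{\max}-\ell^\star)+2\bar\lambda+\ell^\star p^\star .$$
   Context: System $x(k+1)=f(x(k),u(k))$ with constraint sets $\mathbb{X}\subset\mathbb{R}^n$, $\mathbb{U}\subset\mathbb{R}^m$ and stage cost $\ell:\mathbb{X}\times\mathbb{U}\to\mathbb{R}$, which is assumed non-negative. For $u\in\mathbb{U}^T$, $x_u(0,x)=x$, $x_u(k+1,x)=f(x_u(k,x),u(k))$; $\mathbb{U}^T(x)$ is the set of $u\in\mathbb{U}^T$ with $x_u(k,x)\in\mathbb{X}$ for $k=0,\dots,T$. $[k]_p$ is $k$ mod $p$. A feasible $p$-periodic orbit is $\Pi\in(\mathbb{X}\times\mathbb{U})^p$ with $\Pi_\mathbb{X}([k+1]_p)=f(\Pi(k))$; $\|(x,u)\|_\Pi:=\min_k\|(x,u)-\Pi(k)\|$; $\ell^\star:=\inf$ over all feasible periodic orbits of $\frac1p\sum_{k=0}^{p-1}\ell(\Pi(k))$; $\Pi^\star$ is a fixed feasible $p^\star$-periodic orbit attaining $\ell^\star$. $\ell_{\max}:=\sup_{\mathbb{X}\times\mathbb{U}}\ell$.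 (A1) $f,\ell$ continuous, $\mathbb{X},\mathbb{U}$ compact. (A3) There are $\lambda:\mathbb{X}\to\mathbb{R}$, $\bar\lambda$ with $|\lambda|\le\bar\lambda$ on $\mathbb{X}$, and $\underline\alpha_{\tilde\ell}\in\mathcal K_\infty$ with $\ell(x,u)-\ell^\star+\lambda(x)-\lambda(f(x,u))\ge\underline\alpha_{\tilde\ell}(\|(x,u)\|_{\Pi^\star})$ for all $x\in\mathbb{X}$, $u\in\mathbb{U}^1(x)$. $\beta_N(k)=\frac{N-k}{N}$, $J_N^\beta(x,u)=\sum_{k=0}^{N-1}\beta_N(k)\ell(x_u(k,x),u(k))$, $V_N^\beta(x)=\inf_{u\in\mathbb{U}^N(x)}J_N^\beta(x,u)$. *)

From HB Require Import structures.
From mathcomp Require Import all_boot all_order all_algebra.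
From mathcomp Require Import all_classical all_reals all_analysis.
Set Implicit Arguments. Unset Strict Implicit. Unset Printing Implicit Defensive.
Import Order.TTheory GRing.Theory Num.Theory.
Import numFieldNormedType.Exports.
Local Open Scope classical_set_scope.
Local Open Scope ring_scope.

Section Defs.
Variables (R : realType) (n m : nat).
Notation st := 'rV[R]_n.
Notation inp := 'rV[R]_m.
Variables (X : set st) (U : set inp) (f : st -> inp -> st) (ell : st -> inp -> R).

Fixpoint traj (x : st) (u : nat -> inp) (k : nat) : st :=
  match k with
  | 0 => x
  | k'.+1 => f (traj x u k') (u k')
  end.

Definition feasible_input (T : nat) (x : st) (u : nat -> inp) : Prop :=
  (forall k, (k < T)%N -> U (u k)) /\ (forall k, (k <= T)%N -> X (traj x u k)).

Definition feasible_orbit (p : nat) (Pi : nat -> st * inp) : Prop :=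
  (0 < p)%N /\
  (forall k, (k < p)%N -> X (Pi k).1 /\ U (Pi k).2) /\
  (forall k, (k < p)%N -> (Pi (k.+1 %% p)%N).1 = f (Pi k).1 (Pi k).2).

Definition orbit_avg_cost (p : nat) (Pi : nat -> st * inp) : R :=
  p%:R^-1 * \sum_(k < p) ell (Pi k).1 (Pi k).2.

Definition ellstar : R :=
  inf [set r | exists p Pi, feasible_orbit p Pi /\ r = orbit_avg_cost p Pi].

Definition ellmax : R := sup [set ell z.1 z.2 | z in X `*` U].

(* ||(x,u)||_Pi = min_k ||(x,u) - Pi(k)|| (max-norm on the product) *)
Definition orbit_dist (p : nat) (Pi : nat -> st * inp) (z : st * inp) : R :=
  inf [set `|z - Pi k| | k in [set k : nat | (k < p)%N]].

Definition betaN (N k : nat) : R := (N%:R - k%:R) / N%:R.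

Definition J_beta (N : nat) (x : st) (u : nat -> inp) : R :=
  \sum_(k < N) betaN N k * ell (traj x u k) (u k).

Definition V_beta (N : nat) (x : st) : R :=
  inf [set J_beta N x u | u in [set u | feasible_input N x u]].

Definition assumption_A1 : Prop :=
  {within X `*` U, continuous (fun z : st * inp => f z.1 z.2)} /\
  {within X `*` U, continuous (fun z : st * inp => ell z.1 z.2)} /\
  compact X /\ compact U.

Definition optimal_orbit (pstar : nat) (Pistar : nat -> st * inp) : Prop :=
  feasible_orbit pstar Pistar /\ orbit_avg_cost pstar Pistar = ellstar.

End Defs.

Definition K_infty (R : realType) (alpha : R -> R) : Prop :=
  {within [set r : R | 0 <= r], continuous alpha} /\
  alpha 0 = 0 /\
  (forall r s : R, 0 <= r -> r < s -> alpha r < alpha s) /\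
  (forall K : R, exists r : R, 0 <= r /\ K < alpha r).

Definition assumption_A3 (R : realType) (n m : nat) (X : set 'rV[R]_n)
  (U : set 'rV[R]_m) (f : 'rV[R]_n -> 'rV[R]_m -> 'rV[R]_n)
  (ell : 'rV[R]_n -> 'rV[R]_m -> R) (pstar : nat) (Pistar : nat -> 'rV[R]_n * 'rV[R]_m)
  (lam : 'rV[R]_n -> R) (lambar : R) (alpha : R -> R) : Prop :=
  (forall x, X x -> `|lam x| <= lambar) /\
  K_infty alpha /\
  (forall x u, X x -> U u -> X (f x u) ->
     alpha (orbit_dist pstar Pistar (x, u)) <=
       ell x u - ellstar X U f ell + lam x - lam (f x u)).

From mathcomp Require Import all_boot all_order all_algebra.
From mathcomp Require Import all_classical all_reals all_analysis.
From mathcomp Require Import lra.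
Set Implicit Arguments. Unset Strict Implicit. Unset Printing Implicit Defensive.
Import Order.TTheory GRing.Theory Num.Theory.
Import numFieldNormedType.Exports.
Local Open Scope classical_set_scope.
Local Open Scope ring_scope.

(* Steer x onto the optimal orbit with ubar in M steps and then follow the
   orbit forever.  Each of the first M stage costs is at most ell_max, and any
   t consecutive stage costs on the orbit add up to at most (t + p_star) ell_star,
   so the partial sums of the stage costs a_k satisfy
     sum_(k < j) a_k <= j ell_star + C,   C = M (ell_max - ell_star) + p_star ell_star.
   As N J_N^beta = sum_(j < N) sum_(k <= j) a_k, this yields
   J_N^beta <= (N + 1) / 2 ell_star + C, and |lambda| <= lambar accounts for
   the remaining 2 lambar. *)

Section PeriodicSums.
Variables (V : zmodType) (p : nat) (g : nat -> V).
Hypothesis g_periodic : forall i, g (i + p)%N = g i.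

Lemma big_nat_periodic_shift l :
  \sum_(0 <= i < p) g (l + i)%N = \sum_(0 <= i < p) g i.
Proof.
elim: l => [|l IHl]; first by apply: eq_bigr => i _; rewrite add0n.
rewrite -{}IHl; apply: (@addIr _ (g l)).
have := big_nat_recr p 0 (fun i => g (l + i)%N) (leq0n p) (op := +%R) (idx := 0).
rewrite big_nat_recl //= addn0 g_periodic addrC => <-.
by congr (_ + _); apply: eq_bigr => i _; rewrite addSnnS.
Qed.

Lemma big_nat_periodic_mul q :
  \sum_(0 <= i < q * p) g i = (\sum_(0 <= i < p) g i) *+ q.
Proof.
elim: q => [|q IHq]; first by rewrite mul0n big_geq.
rewrite mulSn (big_cat_nat (n := p)) ?leq_addr //= mulrS; congr (_ + _).
rewrite -{1}[p]add0n big_addn addKn -IHq.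
by apply: eq_bigr => i _; rewrite g_periodic.
Qed.

End PeriodicSums.

Lemma big_nat_periodic_le (R : numDomainType) (p : nat) (g : nat -> R) :
  (0 < p)%N -> (forall i, g (i + p)%N = g i) -> (forall i, 0 <= g i) ->
  forall t, p%:R * \sum_(0 <= i < t) g i <= (t + p)%:R * \sum_(0 <= i < p) g i.
Proof.
move=> p_gt0 g_periodic g_ge0 t; set q := (t %/ p).+1.
have t_le_qp : (t <= q * p)%N by rewrite ltnW // ltn_ceil.
have pq_le : (p * q <= t + p)%N by rewrite mulnS addnC leq_add2r mulnC leq_divM.
have sum_le : \sum_(0 <= i < t) g i <= (\sum_(0 <= i < p) g i) *+ q.
  rewrite -big_nat_periodic_mul // (big_cat_nat (n := t) (p := q * p)) //= lerDl.
  exact: sumr_ge0.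
apply: (le_trans (ler_wpM2l (ler0n _ _) sum_le)).
rewrite -[_ *+ q]mulr_natl mulrA -natrM ler_wpM2r ?ler_nat //.
exact: sumr_ge0.
Qed.

Lemma big_nat_weighted_prefix (R : pzRingType) (a : nat -> R) N :
  \sum_(0 <= k < N) (N%:R - k%:R) * a k
  = \sum_(0 <= j < N) \sum_(0 <= k < j.+1) a k.
Proof.
elim: N => [|N IHN]; first by rewrite !big_geq.
rewrite -natr1 [RHS]big_nat_recr //= -IHN [in RHS]big_nat_recr //= addrA.
rewrite -big_split big_nat_recr //= addrAC subrr add0r mul1r; congr (_ + _).
by apply: eq_bigr => k _; rewrite addrAC mulrDl mul1r.
Qed.

Lemma sum_succ_mul2 N : ((\sum_(0 <= j < N) j.+1) * 2 = N * N.+1)%N.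
Proof.
have -> : (\sum_(0 <= j < N) j.+1 = \sum_(0 <= j < N.+1) j)%N.
  by rewrite big_nat_recl.
by rewrite bin2_sum mulnC -(mul_bin_diag N.+1 1) bin1 mulnC.
Qed.

Lemma sum_betaN_le (R : realType) (a : nat -> R) (s C : R) N :
  0 <= s -> (forall j, \sum_(0 <= k < j) a k <= j%:R * s + C) ->
  \sum_(k < N) betaN R N k * a k <= N.+1%:R / 2 * s + C.
Proof.
move=> s_ge0 prefix_le.
have C_ge0 : 0 <= C by have := prefix_le 0%N; rewrite big_geq // mul0r add0r.
have [->|N_gt0] := posnP N.
  by rewrite big_ord0 addr_ge0 // mulr_ge0 // divr_ge0.
have N_neq0 : N%:R != 0 :> R by rewrite pnatr_eq0 -lt0n.
rewrite -(ler_pM2l (_ : 0 < N%:R)) ?ltr0n // mulr_sumr.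
have -> : \sum_(k < N) N%:R * (betaN R N k * a k)
          = \sum_(0 <= k < N) (N%:R - k%:R) * a k.
  by rewrite big_mkord; apply: eq_bigr => k _; rewrite /betaN mulrA mulrCA mulfV ?mulr1.
rewrite big_nat_weighted_prefix.
apply: (le_trans (ler_sum_nat (fun j _ => prefix_le j.+1))).
have gauss : \sum_(0 <= j < N) j.+1%:R = N%:R * N.+1%:R / 2 :> R.
  have := congr1 (fun k => k%:R : R) (sum_succ_mul2 N).
  by rewrite /= !natrM natr_sum => <-; rewrite mulfK ?pnatr_eq0.
rewrite big_split /= -mulr_suml sumr_const_nat subn0 gauss.
by rewrite mulrDr !mulrA [N%:R * C]mulr_natl.
Qed.

Lemma big_nat_steer_periodic_le (R : realDomainType) (a g : nat -> R)
    (M p : nat) (e s : R) :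
  (0 < p)%N -> (forall i, g (i + p)%N = g i) -> (forall i, 0 <= g i <= e) ->
  \sum_(0 <= i < p) g i = p%:R * s ->
  (forall k, (k < M)%N -> a k <= e) -> (forall i, a (M + i)%N = g i) ->
  forall j, \sum_(0 <= k < j) a k <= j%:R * s + (M%:R * (e - s) + s * p%:R).
Proof.
move=> p_gt0 g_periodic g_bnd g_sum a_le a_tail j.
have p_pos : 0 < p%:R :> R by rewrite ltr0n.
have g_ge0 i : 0 <= g i by case/andP: (g_bnd i).
have s_ge0 : 0 <= s by rewrite -(pmulr_rge0 _ p_pos) -g_sum sumr_ge0.
have s_le_e : s <= e.
  rewrite -(ler_pM2l p_pos) -g_sum mulr_natl -[p in e *+ p]subn0 -sumr_const_nat.
  by apply: ler_sum_nat => i _; case/andP: (g_bnd i).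
have head_le i : (i <= M)%N -> \sum_(0 <= k < i) a k <= i%:R * e.
  move=> i_le; rewrite mulr_natl -[i in e *+ i]subn0 -sumr_const_nat.
  by apply: ler_sum_nat => k /andP [_ k_lt]; apply: a_le (leq_trans k_lt i_le).
have ps_ge0 : 0 <= s * p%:R by rewrite mulr_ge0.
case: (leqP j M) => [j_le|/ltnW M_le].
  have : j%:R * (e - s) <= M%:R * (e - s) by rewrite ler_wpM2r ?subr_ge0 ?ler_nat.
  have := head_le j j_le; lra.
rewrite -(subnKC M_le); set t := (j - M)%N.
rewrite (big_cat_nat (n := M)) ?leq_addr //=.
have -> : \sum_(M <= k < M + t) a k = \sum_(0 <= i < t) g i.
  rewrite -{1}(add0n M) big_addn addKn.
  by apply: eq_bigr => i _; rewrite addnC a_tail.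
have tail_le : \sum_(0 <= i < t) g i <= (t + p)%:R * s.
  by rewrite -(ler_pM2l p_pos) mulrCA -g_sum big_nat_periodic_le.
have := head_le M (leqnn M); rewrite natrD; lra.
Qed.

Section SteerToOrbit.
Variables (R : realType) (n m : nat) (X : set 'rV[R]_n) (U : set 'rV[R]_m).
Variables (f : 'rV[R]_n -> 'rV[R]_m -> 'rV[R]_n) (ell : 'rV[R]_n -> 'rV[R]_m -> R).
Hypothesis ell_ge0 : forall x u, X x -> U u -> 0 <= ell x u.

Lemma ell_le_ellmax : assumption_A1 X U f ell ->
  forall x u, X x -> U u -> ell x u <= ellmax X U ell.
Proof.
move=> [_ [ell_cont [X_compact U_compact]]] x u Xx Uu.
have [_ /ub_le_sup] : has_sup [set ell z.1 z.2 | z in X `*` U].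
  apply: compact_has_sup; first by exists (ell x u), (x, u).
  exact: continuous_compact ell_cont (compact_setX X_compact U_compact).
by apply; exists (x, u).
Qed.

Lemma V_beta_le_J_beta N x u :
  feasible_input X U f N x u -> V_beta X U f ell N x <= J_beta f ell N x u.
Proof.
move=> u_feasible; apply: ge_inf; last by exists u.
exists 0 => _ [v [vU vX] <-]; apply: sumr_ge0 => k _.
apply: mulr_ge0; first by rewrite divr_ge0 // subr_ge0 ler_nat ltnW.
by apply: ell_ge0; [apply: vX; apply: ltnW | apply: vU].
Qed.

Variables (p : nat) (Pi : nat -> 'rV[R]_n * 'rV[R]_m).
Hypothesis Pi_feasible : feasible_orbit X U f p Pi.

Lemma sum_orbit_cost :
  \sum_(0 <= i < p) ell (Pi i).1 (Pi i).2 = p%:R * orbit_avg_cost ell p Pi.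
Proof.
have [p_gt0 _] := Pi_feasible.
by rewrite /orbit_avg_cost mulrA mulfV ?mul1r ?big_mkord // pnatr_eq0 -lt0n.
Qed.

Lemma orbit_avg_cost_ge0 : 0 <= orbit_avg_cost ell p Pi.
Proof.
have [_ [Pi_XU _]] := Pi_feasible.
rewrite mulr_ge0 ?invr_ge0 // sumr_ge0 // => -[i i_lt] _.
by have [] := Pi_XU i i_lt; apply: ell_ge0.
Qed.

Definition steer_then_orbit (ub : nat -> 'rV[R]_m) (M l : nat) (k : nat) :=
  if (k < M)%N then ub k else (Pi ((l + (k - M)) %% p)).2.

Variables (x : 'rV[R]_n) (ub : nat -> 'rV[R]_m) (M l : nat).
Hypotheses (ub_feasible : feasible_input X U f M x ub) (l_lt_p : (l < p)%N)
  (ub_reaches_orbit : traj f x ub M = (Pi l).1).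
Let u := steer_then_orbit ub M l.

Lemma traj_steer_then_orbit_head k : (k <= M)%N -> traj f x u k = traj f x ub k.
Proof.
by elim: k => [|k IHk] // k_lt /=; rewrite IHk 1?ltnW // /u /steer_then_orbit k_lt.
Qed.

Lemma steer_then_orbit_tail d : u (M + d)%N = (Pi ((l + d) %% p)).2.
Proof. by rewrite /u /steer_then_orbit ltnNge leq_addr /= addKn. Qed.

Lemma traj_steer_then_orbit_tail d : traj f x u (M + d)%N = (Pi ((l + d) %% p)).1.
Proof.
have [p_gt0 [_ Pi_step]] := Pi_feasible.
elim: d => [|d IHd].
  by rewrite addn0 traj_steer_then_orbit_head // ub_reaches_orbit addn0 modn_small.
rewrite addnS /= IHd steer_then_orbit_tail -Pi_step ?ltn_pmod //.
by congr (Pi _).1; rewrite -addn1 modnDml addn1 addnS.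
Qed.

Lemma feasible_steer_then_orbit T : feasible_input X U f T x u.
Proof.
have [p_gt0 [Pi_XU _]] := Pi_feasible.
have [ubU ubX] := ub_feasible.
suff all_k k : U (u k) /\ X (traj f x u k) by split=> k _; have [] := all_k k.
case: (ltnP k M) => [k_lt|/subnKC <-].
  rewrite traj_steer_then_orbit_head 1?ltnW // /u /steer_then_orbit k_lt.
  by split; [apply: ubU | apply: ubX; apply: ltnW].
rewrite steer_then_orbit_tail traj_steer_then_orbit_tail.
by have [] := Pi_XU _ (ltn_pmod (l + (k - M)) p_gt0).
Qed.

Let s := orbit_avg_cost ell p Pi.

Lemma cost_steer_then_orbit_prefix_le : assumption_A1 X U f ell ->
  forall j, \sum_(0 <= k < j) ell (traj f x u k) (u k)
    <= j%:R * s + (M%:R * (ellmax X U ell - s) + s * p%:R).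
Proof.
move=> A1; have [p_gt0 [Pi_XU _]] := Pi_feasible.
pose g i := ell (Pi ((l + i) %% p)).1 (Pi ((l + i) %% p)).2.
apply: (@big_nat_steer_periodic_le _ _ g) => //.
- by move=> i; rewrite /g addnA modnDr.
- move=> i; have [Xi Ui] := Pi_XU _ (ltn_pmod (l + i) p_gt0).
  by rewrite ell_ge0 ?ell_le_ellmax.
- pose c i := ell (Pi (i %% p)).1 (Pi (i %% p)).2.
  rewrite -sum_orbit_cost (@big_nat_periodic_shift _ _ c); last first.
    by move=> i; rewrite /c modnDr.
  by apply: eq_big_nat => i /andP [_ i_lt]; rewrite /c modn_small.
- move=> k k_lt; have [ubU ubX] := ub_feasible.
  rewrite traj_steer_then_orbit_head 1?ltnW // /u /steer_then_orbit k_lt.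
  by apply: ell_le_ellmax => //; [apply: ubX; apply: ltnW | apply: ubU].
- by move=> i; rewrite traj_steer_then_orbit_tail steer_then_orbit_tail.
Qed.

End SteerToOrbit.

Theorem lemma22 (R : realType) (n m : nat) (X : set 'rV[R]_n) (U : set 'rV[R]_m)
  (f : 'rV[R]_n -> 'rV[R]_m -> 'rV[R]_n) (ell : 'rV[R]_n -> 'rV[R]_m -> R)
  (ell_ge0 : forall x u, X x -> U u -> 0 <= ell x u)
  (A1 : assumption_A1 X U f ell)
  (pstar : nat) (Pistar : nat -> 'rV[R]_n * 'rV[R]_m)
  (Hstar : optimal_orbit X U f ell pstar Pistar)
  (lam : 'rV[R]_n -> R) (lambar : R) (alpha : R -> R)
  (A3 : assumption_A3 X U f ell pstar Pistar lam lambar alpha)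
  (x : 'rV[R]_n) (hx : X x) (M : nat)
  (reach : exists (ubar : nat -> 'rV[R]_m) (l : nat),
      feasible_input X U f M x ubar /\ (l < pstar)%N /\
      traj f x ubar M = (Pistar l).1)
  (N : nat) :
  V_beta X U f ell N x - (N.+1)%:R / 2 * ellstar X U f ell + lam x + lambar
    <= M%:R * (ellmax X U ell - ellstar X U f ell) + 2 * lambar
       + ellstar X U f ell * pstar%:R.
Proof.
have [Pi_feasible <-] := Hstar.
have [lam_bound _] := A3.
have [ub [l [ub_feasible [l_lt reach_l]]]] := reach.
have prefix_le := cost_steer_then_orbit_prefix_le ell_ge0 Pi_feasible
  ub_feasible l_lt reach_l A1.
have V_le := V_beta_le_J_beta ell_ge0 (feasible_steer_then_orbit Pi_feasible
  ub_feasible l_lt reach_l N).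
have J_le := sum_betaN_le N (orbit_avg_cost_ge0 ell_ge0 Pi_feasible) prefix_le.
have lam_le : lam x <= lambar := ler_normlW (lam_bound x hx).
move: V_le J_le; rewrite /J_beta; lra.
Qed.
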